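(* Let $X$ be a compact Hausdorff topological space. Then $H_n^M(X)=0$ for all $n>0$.
   Context: A continuous multivalued map $X\to Y$ is a subset $T\subset X\times Y$ such that the restriction of the projection $X\times Y\to X$ to $T$ is proper (universally closed; equivalently closed with compact fibers), surjective and has finite fibers; $M(X,Y)$ is the set of these. For $\alpha\in M(\Delta_n,X)$ and a continuous map $f:\Delta_{n-1}\to\Delta_n$, $\alpha\circ\mathrm{gr}(f)=\{(s,x)\in\Delta_{n-1}\times X:(f(s),x)\in\alpha\}$. Let $\Delta_n=\{(t_0,\dots,t_n)\in\mathbb{R}^{n+1}: t_i\ge 0,\ \sum t_i=1\}$ and $\delta^n_i:\Delta_{n-1}\to\Delta_n$, $\delta^n_i(t_0,\dots,t_{n-1})=(t_0,\dots,t_{i-1},0,t_i,\dots,t_{n-1})$ for $0\le i\le n$. Set $S_n^M(X)=M(\Delta_n,X)$, $d^i_n(\alpha)=\alpha\circ\mathrm{gr}(\delta^n_i)$, let $C_n^M(X)$ be the free abelian group with basis $S_n^M(X)$ and differential $d_n=\sum_{i=0}^n(-1)^i d^i_n$, and define the multivalued singular homology $H_n^M(X)=H_n(C_*^M(X),d_* )$. *)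

From HB Require Import structures.
From mathcomp Require Import all_boot all_order all_algebra.
From mathcomp Require Import all_classical all_reals all_analysis.
Unset Printing Implicit Defensive.
Import Order.TTheory GRing.Theory Num.Theory.
Import numFieldNormedType.Exports.
Local Open Scope classical_set_scope.
Local Open Scope ring_scope.

Section MV.
Variables (R : realType) (X : topologicalType).

Definition simplex (n : nat) : set 'rV[R]_(n.+1) :=
  [set t | (forall j, 0 <= t 0 j) /\ \sum_(j < n.+1) t 0 j = 1].

(* Ambient space of (graphs of) multivalued maps Delta_n -> X. *)
Definition Pt (n : nat) := ('rV[R]_(n.+1) * X)%type.

(* Closed subsets of T are T `&` D with D
   closed; since Delta_n is closed in R^{n+1}, closedness in Delta_n equals
   closedness in R^{n+1}. *)
Definition is_mvmap (n : nat) (T : set (Pt n)) : Prop :=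
  [/\ (forall p, T p -> simplex n p.1),
      (forall D : set (Pt n), closed D -> closed (fst @` (T `&` D))),
      (forall t, compact [set x | T (t, x)]),
      (forall t, simplex n t -> exists x, T (t, x)) &
      (forall t, finite_set [set x | T (t, x)])].

Definition delta (n : nat) (i : 'I_n.+2) (t : 'rV[R]_(n.+1)) : 'rV[R]_(n.+2) :=
  \row_(j < n.+2) (if (j < i)%N then t 0 (inord j)
                   else if (j == i :> nat) then 0 else t 0 (inord j.-1)).

Definition face (n : nat) (i : 'I_n.+2) (A : set (Pt n.+1)) : set (Pt n) :=
  [set p | simplex n p.1 /\ A (delta n i p.1, p.2)].

(* A chain of degree n: a finite formal Z-linear combination of elements
   of S_n^M(X), represented by a list of (coefficient, generator) pairs. *)
Definition chain (n : nat) := seq (int * set (Pt n)).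

Definition is_chain (n : nat) (s : chain n) : Prop :=
  forall p, p \in s -> is_mvmap n p.2.

(* The coefficient of the generator B in the formal sum s; two formal sums
   are equal in the free abelian group C_n^M(X) iff their coefficient
   functions agree. *)
Definition coef (n : nat) (s : chain n) (B : set (Pt n)) : int :=
  \sum_(p <- s) (if asbool (p.2 = B) then p.1 else 0).

Definition bdry (n : nat) (s : chain n.+1) : chain n :=
  flatten [seq [seq (((-1) ^+ (i : nat)) * p.1, face n i p.2) | i : 'I_n.+2 <- enum 'I_n.+2]
          | p <- s].

Definition homology_vanishes (m : nat) : Prop :=
  forall s : chain m.+1, is_chain m.+1 s ->
    (forall B, coef m (bdry m s) B = 0) ->
    exists t : chain m.+2, is_chain m.+2 t /\ forall B, coef m.+1 (bdry m.+1 t) B = coef m.+1 s B.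

End MV.

(* Fix a point x0 of X.  The cone on a multivalued map alpha : Delta_n -> X is
   the multivalued map on Delta_(n+1) whose values at t are those of alpha at
   the radial projection (t_1, ..., t_(n+1)) / (1 - t_0) of t from the vertex
   e_0 when t_0 <= 1/2, and x0 when t_0 >= 1/2; on t_0 = 1/2 it takes both,
   which multivalued maps allow, so no continuity has to be arranged at the
   seam.  Compactness of X keeps the projection of the graph closed and the
   Hausdorff property keeps the graph closed, so the cone is again a
   continuous multivalued map.  Its 0-th face is alpha and its (i+1)-st face is
   the cone on d^i alpha, so d (cone c) = c - cone (d c) for every chain c of
   positive degree.  The cone is injective on generators, hence cone (d c) = 0
   when d c = 0, and every cycle c is the boundary of cone c. *)
From HB Require Import structures.
From mathcomp Require Import all_boot all_order all_algebra.
From mathcomp Require Import all_classical all_reals all_analysis.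
From mathcomp Require Import lra zify ring.
Import Order.TTheory GRing.Theory Num.Theory.
Import numFieldNormedType.Exports.
Local Open Scope classical_set_scope.
Local Open Scope ring_scope.

Section ProductTopology.
Context {Y X : topologicalType}.

Lemma closed_fst_image (A : set (Y * X)) :
  compact [set: X] -> closed A -> closed (fst @` A).
Proof.
move=> cX cA y cly.
pose F : set_system X := fun S => exists U, nbhs y U /\
   (fun x => exists y', U y' /\ A (y', x)) `<=` S.
have FF : Filter F.
  split.
  - by exists setT; split => //; exact: filterT.
  - move=> P Q [U [nU sU]] [V [nV sV]]; exists (U `&` V); split.
      exact: filterI.
    by move=> x [y' [[Uy Vy] Ay]]; split; [apply: sU|apply: sV]; exists y'.
  - by move=> P Q PQ [U [nU sU]]; exists U; split => // x /sU /PQ.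
have PF : ProperFilter F.
  apply: Build_ProperFilter_ex => // P [U [nU sU]].
  have [_ [[p Ap <-] Up]] := cly U nU.
  by exists p.2; apply: sU; exists p.1; split => //; case: p Ap Up.
have FT : F setT by exists setT; split => //; exact: filterT.
have [x [_ clx]] := cX F PF FT.
exists (y, x) => //; apply: cA => B /= [[U V] [nU nV] sB].
have FU : F (fun x => exists y', U y' /\ A (y', x)) by exists U; split.
have [x' [[y' [Uy Ay]] Vx]] := clx _ _ FU nV.
by exists (y', x'); split => //; apply: sB.
Qed.

(* A multivalued map with closed projections and compact fibres into a
   Hausdorff space has a closed graph: a point (t, x) of the closure is
   approached inside the fibre over t, and compactness of that fibre yields a
   cluster point, which must be x. *)
Lemma closed_graph_of_proper (A : set (Y * X)) :
  hausdorff_space X ->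
  (forall D : set (Y * X), closed D -> closed (fst @` (A `&` D))) ->
  (forall t, compact [set x | A (t, x)]) -> closed A.
Proof.
move=> hX pA cA [t x] clA.
pose Fb := [set x | A (t, x)].
pose G : set_system X := fun S => exists U, nbhs x U /\ (closure U `&` Fb) `<=` S.
have GF : Filter G.
  split.
  - by exists setT; split => //; exact: filterT.
  - move=> P Q [U [nU sU]] [V [nV sV]]; exists (U `&` V); split.
      exact: filterI.
    by move=> z [/closureI [cU cV] Fz]; split; [apply: sU|apply: sV].
  - by move=> P Q PQ [U [nU sU]]; exists U; split => // z /sU /PQ.
have PG : ProperFilter G.
  apply: Build_ProperFilter_ex => // P [U [nU sU]].
  have cD : closed (snd @^-1` closure U : set (Y * X)).
    by apply: preimage_closed; [move=> p _; exact: cvg_snd | exact: closed_closure].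
  have : closure (fst @` (A `&` (snd @^-1` closure U))) t.
    move=> W nW.
    have nWU : nbhs ((t, x) : Y * X) (W `*` U) by exists (W, U).
    have [p [Ap [Wp Up]]] := clA _ nWU.
    exists p.1; split => //; exists p => //; split => //.
    exact: subset_closure.
  move/(pA _ cD) => [p [Ap cUp] pt].
  by exists p.2; apply: sU; split => //; rewrite /Fb -pt; case: p Ap cUp pt.
have GFb : G Fb by exists setT; split; [exact: filterT | by move=> z []].
have [y [Fy cly]] := cA t G PG GFb.
suff -> : x = y by [].
apply: hX => U V nU nV.
have GU : G (closure U `&` Fb) by exists U; split.
move: nV; rewrite nbhsE => -[W [oW Wy] WV].
have [z [[cUz _] Wz]] := cly _ _ GU (open_nbhs_nbhs (conj oW Wy)).
have [w [Uw Ww]] := cUz W (open_nbhs_nbhs (conj oW Wz)).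
by exists w; split => //; apply: WV.
Qed.

End ProductTopology.

Lemma mx_continuous (K : numFieldType) (Y : topologicalType) m n
    (f : Y -> 'M[K]_(m, n)) :
  (forall i j, continuous (fun y => f y i j)) -> continuous f.
Proof.
move=> fc y A [P HP sPA].
apply: (@filterS _ _ _ [set y' | forall i j, P i j (f y' i j)]).
  by move=> y' Hy'; apply: sPA.
apply: filter_forall => i; apply: filter_forall => j.
exact: (fc i j y (P i j) (HP i j)).
Qed.

Section Simplex.
Context {R : realType}.
Local Notation simplex := (simplex R).
Local Notation delta := (delta R).

Lemma simplex_closed n : closed (simplex n).
Proof.
have -> : simplex n = (\bigcap_(j in setT) [set t : 'rV[R]_n.+1 | 0 <= t 0 j]) `&`
   ((fun t : 'rV[R]_n.+1 => \sum_(j < n.+1) t 0 j) @^-1` [set 1]).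
  by apply/seteqP; split => t /= [H1 H2]; split => // j; [move=> _|]; exact: H1.
apply: closedI.
  apply: closed_bigI => j _.
  apply: (@preimage_closed _ _ (fun t : 'rV[R]_n.+1 => t 0 j) [set r : R | 0 <= r]).
    by move=> t _; exact: coord_continuous.
  exact: closed_ge.
apply: preimage_closed; last exact: closed_eq.
move=> t _; apply: continuous_big => [|j _]; first exact: add_continuous.
exact: coord_continuous.
Qed.

Lemma vertex_simplex n : simplex n (\row_(j < n.+1) ((j == ord0)%:R : R)).
Proof.
split=> [j|]; first by rewrite mxE ler0n.
by rewrite big_ord_recl mxE eqxx big1 ?addr0 // => j _; rewrite mxE.
Qed.

Lemma delta_self n (i : 'I_n.+2) (t : 'rV[R]_n.+1) : delta n i t 0 i = 0.
Proof. by rewrite mxE ltnn eqxx. Qed.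

Lemma delta_lift n (i : 'I_n.+2) (t : 'rV[R]_n.+1) j :
  delta n i t 0 (lift i j) = t 0 j.
Proof.
rewrite mxE /= /bump.
have hj := ltn_ord j; have hi := ltn_ord i.
case: (leqP i j) => hij /=.
  have -> : (1 + j < i)%N = false by lia.
  have -> : ((1 + j)%N == i) = false by lia.
  by congr (t 0 _); apply: val_inj; rewrite /= inordK //; lia.
by rewrite add0n hij; congr (t 0 _); apply: val_inj; rewrite /= inordK.
Qed.

Lemma delta_simplex n (i : 'I_n.+2) (t : 'rV[R]_n.+1) :
  simplex n t -> simplex n.+1 (delta n i t).
Proof.
move=> [t_ge0 t_sum]; split.
  move=> j; rewrite mxE; case: ifP => _; first exact: t_ge0.
  by case: ifP => _ //; exact: t_ge0.
rewrite (bigD1_ord i) //= delta_self add0r -t_sum.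
by apply: eq_bigr => j _; rewrite delta_lift.
Qed.

Lemma delta_lift0_vertex n (i : 'I_n.+2) (s : 'rV[R]_n.+2) :
  delta n.+1 (lift ord0 i) s 0 0 = s 0 0.
Proof. by rewrite mxE /=; congr (s 0 _); apply: val_inj; rewrite /= inordK. Qed.

Lemma max_half_gt0 (x : R) : 0 < Num.max x 2^-1.
Proof. by rewrite lt_max orbC invr_gt0 ltr0n. Qed.

(* Radial projection of Delta_(n+1) from the vertex e_0 onto the opposite face,
   with the denominator 1 - t_0 clamped at 1/2 to make it continuous
   everywhere; it is only used where t_0 <= 1/2. *)
Definition base_proj n (t : 'rV[R]_n.+2) : 'rV[R]_n.+1 :=
  \row_j (t 0 (lift ord0 j) / Num.max (1 - t 0 0) 2^-1).

Lemma base_proj_continuous n : continuous (base_proj n).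
Proof.
apply: mx_continuous => i j t.
have -> : (fun y => base_proj n y i j) =
    (fun y : 'rV[R]_n.+2 => y 0 (lift ord0 j) * (Num.max (1 - y 0 0) 2^-1)^-1).
  by apply: funext => y; rewrite mxE.
apply: (@cvgM _ _ (nbhs t)); first exact: coord_continuous.
apply: (@cvgV _ _ (nbhs t)); first by rewrite gt_eqF ?max_half_gt0.
have c1 : {for t, continuous (fun y : 'rV[R]_n.+2 => 1 - y 0 0)}.
  exact: (@cvgB R R^o _ (nbhs t) _ (fun=> 1) (fun y : 'rV[R]_n.+2 => y 0 0)
    1 (t 0 0) (cvg_cst _) (@coord_continuous _ _ _ 0 0 t)).
have c2 : {for t, continuous (fun=> (2^-1 : R))}.
  exact: (@cvg_cst R^o (2^-1 : R) _ (nbhs t) _).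
exact: (@continuous_max R _ _ _ t c1 c2).
Qed.

Lemma base_proj_delta0 n (s : 'rV[R]_n.+1) : base_proj n (delta n ord0 s) = s.
Proof.
apply/rowP => j; rewrite mxE delta_lift delta_self subr0.
rewrite (_ : Num.max 1 2^-1 = 1) ?divr1 //.
by apply/max_idPl; rewrite invf_le1 ?ler1n // ltr0n.
Qed.

Lemma base_proj_delta n (i : 'I_n.+2) (s : 'rV[R]_n.+2) :
  base_proj n.+1 (delta n.+1 (lift ord0 i) s) = delta n i (base_proj n s).
Proof.
apply/rowP => j; rewrite [LHS]mxE delta_lift0_vertex !mxE /= /bump /=.
have hj := ltn_ord j; have hi := ltn_ord i.
rewrite !add1n ltnS eqSS.
case: ifP => hji.
  by congr (s 0 _ / _); apply: val_inj; rewrite /= /bump /= !inordK //; lia.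
case: ifP => hji2; first by rewrite mul0r.
by congr (s 0 _ / _); apply: val_inj; rewrite /= /bump /= !inordK //; lia.
Qed.

Lemma base_proj_simplex n (s : 'rV[R]_n.+2) :
  simplex n.+1 s -> s 0 0 <= 2^-1 -> simplex n (base_proj n s).
Proof.
move=> [s_ge0 s_sum] s00.
have clamp : Num.max (1 - s 0 0) 2^-1 = 1 - s 0 0 by apply/max_idPl; lra.
split=> [j|].
  by rewrite mxE clamp divr_ge0 // subr_ge0; lra.
under eq_bigr do rewrite mxE clamp.
rewrite -mulr_suml.
move: s_sum; rewrite big_ord_recl => s_sum.
have -> : \sum_(i < n.+1) s 0 (lift ord0 i) = 1 - s 0 0 by rewrite -s_sum; ring.
by rewrite divff //; apply/eqP; lra.
Qed.

End Simplex.

Section Cone.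
Context {R : realType} {X : topologicalType} (x0 : X).
Local Notation simplex := (simplex R).
Local Notation Pt := (Pt R X).
Local Notation face := (face R X).

Definition over_simplex {n} (A : set (Pt n)) := forall p, A p -> simplex n p.1.

Definition cone n (A : set (Pt n)) : set (Pt n.+1) :=
  [set p | simplex n.+1 p.1 /\
     ((p.1 0 0 <= 2^-1 /\ A (base_proj n p.1, p.2)) \/
      (2^-1 <= p.1 0 0 /\ p.2 = x0))].

Lemma face_over_simplex n (i : 'I_n.+2) (A : set (Pt n.+1)) :
  over_simplex (face n i A).
Proof. by move=> p []. Qed.

Lemma face0_cone n (A : set (Pt n)) : over_simplex A -> face n ord0 (cone n A) = A.
Proof.
move=> hA; apply/seteqP; split => [[s x]|[s x] Ap] /=.
  move=> [_ [_ [[_ h]|[h _]]]]; first by rewrite base_proj_delta0 in h.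
  by move: h; rewrite delta_self => h; lra.
have hs := hA _ Ap; split=> //; split; first exact: delta_simplex.
by left; rewrite delta_self base_proj_delta0; split => //; rewrite invr_ge0.
Qed.

Lemma face_lift_cone n (i : 'I_n.+2) (A : set (Pt n.+1)) :
  face n.+1 (lift ord0 i) (cone n.+1 A) = cone n (face n i A).
Proof.
apply/seteqP; split => [[s x]|[s x]] /=.
  move=> [hs [_]]; rewrite delta_lift0_vertex base_proj_delta.
  move=> [[h1 h2]|h]; split=> //; last by right.
  by left; split=> //; split=> //; exact: base_proj_simplex.
move=> [hs H]; split=> //; split; first exact: delta_simplex.
rewrite delta_lift0_vertex base_proj_delta.
by case: H => [[h1 [_ h2]]|h]; [left|right].
Qed.

Lemma cone_inj {n} {A B : set (Pt n)} :
  over_simplex A -> over_simplex B -> cone n A = cone n B -> A = B.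
Proof. by move=> hA hB eqAB; rewrite -(face0_cone _ _ hA) eqAB face0_cone. Qed.

Hypotheses (hX : hausdorff_space X) (cX : compact [set: X]).

Lemma cone_closed n (A : set (Pt n)) : closed A -> closed (cone n A).
Proof.
move=> cA.
have c1 : continuous (fun p : Pt n.+1 => p.1) by move=> p; exact: cvg_fst.
have c00 : continuous (fun p : Pt n.+1 => p.1 0 0).
  move=> p; apply: (@continuous_comp _ _ _ (fun p : Pt n.+1 => p.1)
    (fun t : 'rV[R]_n.+2 => t 0 0)); [exact: c1 | exact: coord_continuous].
have cS : closed (fun p : Pt n.+1 => simplex n.+1 p.1).
  by apply: preimage_closed; [move=> p _; exact: c1 | exact: simplex_closed].
have cP : continuous (fun p : Pt n.+1 => (base_proj n p.1, p.2)).
  move=> p.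
  have cb : {for p, continuous (fun q : Pt n.+1 => base_proj n q.1)}.
    by apply: (@continuous_comp _ _ _ (fun q : Pt n.+1 => q.1) (base_proj n));
      [exact: c1 | exact: base_proj_continuous].
  exact: (cvg_pair cb cvg_snd).
have -> : cone n A =
   ((fun p : Pt n.+1 => simplex n.+1 p.1) `&`
     ((fun p : Pt n.+1 => p.1 0 0) @^-1` [set r | r <= 2^-1]) `&`
     ((fun p : Pt n.+1 => (base_proj n p.1, p.2)) @^-1` A)) `|`
   ((fun p : Pt n.+1 => simplex n.+1 p.1) `&`
     ((fun p : Pt n.+1 => p.1 0 0) @^-1` [set r | 2^-1 <= r]) `&`
     (snd @^-1` [set x0])).
  apply/seteqP; split => p /=.
    by move=> [hs [[a b]|[a b]]]; [left|right].
  by move=> [[[hs a] b]|[[hs a] b]]; split => //; [left|right].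
apply: closedU; apply: closedI; try apply: closedI => //.
- by apply: preimage_closed; [move=> p _; exact: c00 | exact: closed_le].
- by apply: preimage_closed => // p _; exact: cP.
- by apply: preimage_closed; [move=> p _; exact: c00 | exact: closed_ge].
- apply: preimage_closed; last exact: accessible_closed_set1 (hausdorff_accessible hX) x0.
  by move=> p _; exact: cvg_snd.
Qed.

Lemma cone_mvmap n (A : set (Pt n)) : is_mvmap R X n A -> is_mvmap R X n.+1 (cone n A).
Proof.
move=> [_ proj_closed fib_compact surj fib_finite].
have cA : closed A := closed_graph_of_proper A hX proj_closed fib_compact.
have cone_fin t : finite_set [set x | cone n A (t, x)].
  apply: (@sub_finite_set _ _ ([set x | A (base_proj n t, x)] `|` [set x0])).
    by move=> x /= [_ [[_ h]|[_ h]]]; [left|right].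
  by rewrite finite_setU; split => //; exact: finite_set1.
split=> //.
- by move=> p [].
- by move=> D cD; apply: closed_fst_image => //; apply: closedI => //; exact: cone_closed.
- by move=> t; apply: finite_compact.
- move=> t ht; case: (lerP (t 0 0) 2^-1) => h.
    have [x hx] := surj _ (base_proj_simplex _ _ ht h).
    by exists x; split => //; left.
  by exists x0; split => //; right; split => //; exact: ltW.
Qed.

End Cone.

Section ConeChain.
Context {R : realType} {X : topologicalType} (x0 : X).
Local Notation chain := (chain R X).
Local Notation coef := (coef R X).
Local Notation bdry := (bdry R X).
Local Notation face := (face R X).
Local Notation cone := (cone x0).

Definition cone_chain {n} (s : chain n) : chain n.+1 := [seq (p.1, cone n p.2) | p <- s].

Lemma coef_bdry n (s : chain n.+1) B :
  coef n (bdry n s) B = \sum_(p <- s) \sum_(i < n.+2)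
     (if asbool (face n i p.2 = B) then (-1) ^+ (i : nat) * p.1 else 0).
Proof.
rewrite /coef /bdry big_flatten big_map; apply: eq_bigr => p _.
by rewrite big_map big_enum.
Qed.

Lemma bdry_over_simplex n (s : chain n.+1) p : p \in bdry n s -> over_simplex p.2.
Proof. by move=> /flattenP [_ /mapP [q _ ->] /mapP [i _ ->]]; exact: face_over_simplex. Qed.

Lemma is_chain_cone_chain n (s : chain n) :
  hausdorff_space X -> compact [set: X] ->
  is_chain R X n s -> is_chain R X n.+1 (cone_chain s).
Proof. by move=> hX cX hs _ /mapP [p /hs hp ->]; exact: cone_mvmap. Qed.

Lemma coef_bdry_cone_chain n (s : chain n.+1) B :
  (forall p, p \in s -> over_simplex p.2) ->
  coef n.+1 (bdry n.+1 (cone_chain s)) B =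
    coef n.+1 s B - coef n.+1 (cone_chain (bdry n s)) B.
Proof.
move=> hs; rewrite coef_bdry big_map /coef big_map big_flatten big_map -sumrB.
apply: eq_big_seq => p /hs hp /=.
rewrite big_map big_enum big_ord_recl /= face0_cone // expr0 mul1r.
rewrite -sumrN; congr (_ + _); apply: eq_bigr => i _.
rewrite face_lift_cone ?lift0 exprS mulN1r mulNr.
by case: ifP => _; rewrite ?oppr0.
Qed.

Lemma coef_cone_chain_eq0 n (s : chain n) B :
  (forall p, p \in s -> over_simplex p.2) -> (forall A, coef n s A = 0) ->
  coef n.+1 (cone_chain s) B = 0.
Proof.
move=> hs s0; rewrite /coef big_map /=.
case: (pselect (exists2 A, over_simplex A & cone n A = B)) => [[A hA <-]|hB].
  apply: etrans (s0 A); apply: eq_big_seq => p /hs hp /=.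
  case: (asboolP (p.2 = A)) => [->|neA]; first by rewrite asboolT.
  by rewrite asboolF // => /(cone_inj x0 hp hA).
apply: big1_seq => p /hs hp; case: asboolP => // hB'.
by case: hB; exists p.2.
Qed.

End ConeChain.

Theorem mainTheorem6 (R : realType) (X : topologicalType)
  (hX : hausdorff_space X) (cX : compact [set: X]) :
  forall n : nat, (0 < n)%N -> homology_vanishes R X n.-1.
Proof.
case=> [//|m] _ s hs hcyc /=.
have s_over p : p \in s -> over_simplex p.2 by move=> /hs [].
case: s hs hcyc s_over => [|p0 s'] hs hcyc s_over.
  by exists [::]; split => [p|B]; rewrite ?in_nil // /coef !big_nil.
have [_ _ _ surj _] := hs p0 (mem_head _ _).
have [x0 _] := surj _ (vertex_simplex m.+1).
exists (cone_chain x0 (p0 :: s')); split; first exact: is_chain_cone_chain.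
move=> B; rewrite coef_bdry_cone_chain // coef_cone_chain_eq0 ?subr0 //.
exact: bdry_over_simplex.
Qed.
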